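(* Let $(M,\Delta,S,\varepsilon)$ be a weak Kac algebra, $e=\Delta(1)$, and let $\theta(x)=\mathrm{Tr}(L_x)$ for $x\in M$, where $L_x:M\to M$, $L_x(y)=xy$, and $\mathrm{Tr}$ is the usual trace of a linear operator on $M$. Then for all $x\in M$, $$(\theta\otimes\mathrm{id})(\Delta(x))=(\theta\otimes S)(e(x\otimes 1))=(\theta\otimes\varepsilon_s\circ S)(\Delta(x)).$$
   Context: All algebras are finite-dimensional over $\mathbb{C}$; $\varsigma$ denotes the flip and $\mu(x\otimes y)=xy$. A weak Kac algebra is a quadruple $(M,\Delta,S,\varepsilon)$ where $M$ is a finite-dimensional $C^*$-algebra; $\Delta:M\to M\otimes M$ is an injective, not necessarily unital, $*$-homomorphism with $(\Delta\otimes\mathrm{id})\Delta=(\mathrm{id}\otimes\Delta)\Delta$; $S:M\to M$ is a linear, unital, antimultiplicative, $*$-preserving bijection with $S^2=\mathrm{id}$ and $(S\otimes S)\circ\Delta=\varsigma\circ\Delta\circ S$; and $\varepsilon:M\to\mathbb{C}$ is linear with $(\varepsilon\otimes\mathrm{id})\Delta=(\mathrm{id}\otimes\varepsilon)\Delta=\mathrm{id}$, $\varepsilon\circ S=\varepsilon$, $\varepsilon(x^* )=\overline{\varepsilon(x)}$, $(\varepsilon\otimes\varepsilon)((x\otimes1)e(1\otimes y))=\varepsilon(xy)$ for all $x,y$, where $e:=\Delta(1)$, and $(\varepsilon_s\otimes\mathrm{id})\Delta(x)=(1\otimes x)e$ for all $x$, where $\varepsilon_s:=\mu(S\otimes\mathrm{id})\Delta$.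 *)

(* Weak Kac algebras, with M ⊗ M modelled in coordinates
   with respect to the canonical basis  vbasis {:M}  of M. *)
From HB Require Import structures.
From mathcomp Require Import all_boot all_order all_algebra all_field.
From mathcomp Require Import complex.
From mathcomp Require Import reals.
Set Implicit Arguments. Unset Strict Implicit. Unset Printing Implicit Defensive.
Import Order.TTheory GRing.Theory Num.Theory.
Local Open Scope ring_scope.

Section WeakKac.
Variables (R : realType) (M : falgType R[i]).
Local Notation C := R[i].

Definition wk_dim : nat := \dim {:M}.
Definition wk_b : wk_dim.-tuple M := vbasis {:M}.
Local Notation d := wk_dim.
Local Notation b := wk_b.
Local Notation bb i := (tnth wk_b i).

(* M ⊗ M  :=  d x d coefficient matrices:  T  <->  \sum_(i,j) T i j (b_i ⊗ b_j)
   M ⊗ M ⊗ M := functions on 'I_d^3 (coefficients on b_i ⊗ b_j ⊗ b_k). *)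
Definition tens2 := 'M[C]_(d, d).
Definition tens3 := 'I_d -> 'I_d -> 'I_d -> C.

Definition tens (x y : M) : tens2 :=
  \matrix_(i < d, j < d) (coord b i x * coord b j y).

Definition map2 (f g : M -> M) (T : tens2) : tens2 :=
  \sum_(i < d) \sum_(j < d) T i j *: tens (f (bb i)) (g (bb j)).

Definition flip2 (T : tens2) : tens2 := T^T.

Definition mul2 (T U : tens2) : tens2 :=
  \sum_(i < d) \sum_(j < d) \sum_(k < d) \sum_(l < d)
     (T i j * U k l) *: tens (bb i * bb k) (bb j * bb l).

Definition star2 (star : M -> M) (T : tens2) : tens2 :=
  \sum_(i < d) \sum_(j < d) conjc (T i j) *: tens (star (bb i)) (star (bb j)).

Definition mu (T : tens2) : M := \sum_(i < d) \sum_(j < d) T i j *: (bb i * bb j).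

(* φ ⊗ ψ : M ⊗ M -> M  (≅ C ⊗ M) for φ : M -> C, ψ : M -> M *)
Definition app_l (phi : M -> C) (psi : M -> M) (T : tens2) : M :=
  \sum_(i < d) \sum_(j < d) (T i j * phi (bb i)) *: psi (bb j).

(* ψ ⊗ φ : M ⊗ M -> M  (≅ M ⊗ C) *)
Definition app_r (psi : M -> M) (phi : M -> C) (T : tens2) : M :=
  \sum_(i < d) \sum_(j < d) (T i j * phi (bb j)) *: psi (bb i).

Definition app_cc (phi psi : M -> C) (T : tens2) : C :=
  \sum_(i < d) \sum_(j < d) T i j * phi (bb i) * psi (bb j).

Definition DeltaL (Delta : M -> tens2) (T : tens2) : tens3 :=
  fun i j k => \sum_(p < d) T p k * Delta (bb p) i j.
Definition DeltaR (Delta : M -> tens2) (T : tens2) : tens3 :=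
  fun i j k => \sum_(p < d) T i p * Delta (bb p) j k.

Definition eps_s (Delta : M -> tens2) (S : M -> M) (x : M) : M :=
  mu (map2 S id (Delta x)).

Definition theta (x : M) : C := \sum_(i < d) coord b i (x * bb i).

(* finite-dimensional C*-algebra: a *-algebra with a C*-norm
   (completeness is automatic in finite dimension) *)
Definition is_cstar_algebra (star : M -> M) : Prop :=
  [/\ (forall (a : C) (x y : M), star (a *: x + y) = conjc a *: star x + star y),
      (forall x, star (star x) = x),
      (forall x y, star (x * y) = star y * star x) &
      exists N : M -> R,
        [/\ forall x, N x = 0 -> x = 0,
            forall x y, N (x + y) <= N x + N y,
            forall (a : C) x, N (a *: x) = ComplexField.Normc.normc a * N x,
            forall x y, N (x * y) <= N x * N y &
            forall x, N (star x * x) = N x ^+ 2]].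

Definition weak_kac (star : M -> M) (Delta : M -> tens2) (S : M -> M)
    (eps : M -> C) : Prop :=
  [/\ is_cstar_algebra star,
      (* Δ : injective, not necessarily unital *-homomorphism, coassociative *)
      [/\ forall (a : C) x y, Delta (a *: x + y) = a *: Delta x + Delta y,
          forall x y, Delta (x * y) = mul2 (Delta x) (Delta y),
          forall x, Delta (star x) = star2 star (Delta x),
          injective Delta &
          forall x, DeltaL Delta (Delta x) = DeltaR Delta (Delta x)],
      [/\ forall (a : C) x y, S (a *: x + y) = a *: S x + S y,
          S 1 = 1,
          forall x y, S (x * y) = S y * S x,
          forall x, S (star x) = star (S x) &
          [/\ bijective S,
               forall x, S (S x) = x &
          forall x, map2 S S (Delta x) = flip2 (Delta (S x))]] &
      [/\ forall (a : C) x y, eps (a *: x + y) = a * eps x + eps y,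
          forall x, app_l eps id (Delta x) = x,
          forall x, app_r id eps (Delta x) = x &
          [/\ forall x, eps (S x) = eps x,
               forall x, eps (star x) = conjc (eps x),
          forall x y, app_cc eps eps
                        (mul2 (mul2 (tens x 1) (Delta 1)) (tens 1 y)) = eps (x * y) &
          forall x, map2 (eps_s Delta S) id (Delta x) = mul2 (tens 1 x) (Delta 1)]]].

End WeakKac.

From HB Require Import structures.
From mathcomp Require Import all_boot all_order all_algebra all_field.
From mathcomp Require Import complex reals.
Set Implicit Arguments. Unset Strict Implicit. Unset Printing Implicit Defensive.
Import GRing.Theory.
Local Open Scope ring_scope.

(* An element T of M ⊗ M is a coordinate matrix, and
   [\tsum_(a, c <- T) beta a c] (the lift of a bilinear [beta] to M ⊗ M) plays
   the role of Sweedler's notation.  Put ε_t(x) = x1 S(x2).  Conjugating the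
   axiom (ε_s ⊗ id)Δ(x) = (1 ⊗ x)e by the antimultiplicative involution
   ς∘(S ⊗ S) gives (id ⊗ ε_t)Δ(x) = e(x ⊗ 1), and ε_s∘S = S∘ε_t; applying
   θ ⊗ S yields the second equality.
   For the first one, pair the second leg with a functional φ: (θ ⊗ φ)Δ(x) is
   the trace of y ↦ (id ⊗ φ)(Δ(x)(y ⊗ 1)).  Since e(y ⊗ 1) = Δ(y1)(1 ⊗ S y2),
   this map factors through M ⊗ M as y ↦ (x ⊗ 1)Δ(y) followed by
   w ⊗ c ↦ (id ⊗ φ)(Δ(w)(1 ⊗ S c)).  Exchanging the two factors under the
   trace, then using coassociativity and (id ⊗ ε_t)Δ(z) = e(z ⊗ 1) again, turns
   it into Σ θ(x e1) φ(S e2), which is (θ ⊗ φ∘S)(e(x ⊗ 1)) as θ is a trace. *)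

Local Notation bilinear beta := (bilinear_for *:%R *:%R beta).

Lemma linear_for_sum (K : pzRingType) (U V : lmodType K) (f : U -> V) :
  linear f -> forall (I : Type) (r : seq I) (P : pred I) (F : I -> U),
  f (\sum_(i <- r | P i) F i) = \sum_(i <- r | P i) f (F i).
Proof.
by move=> /GRing.semilinear_linear/nmod_morphism_semilinear[f0 fD] I r P F; apply: big_morph.
Qed.

Lemma linear_forZ (K : pzRingType) (U V : lmodType K) (f : U -> V) :
  linear f -> forall (a : K) (x : U), f (a *: x) = a *: f x.
Proof. by move=> lin_f a x; apply: scalable_linear. Qed.

Lemma linear_scale (K : comPzRingType) (V : lmodType K) (s : K) :
  linear (fun v : V => s *: v).
Proof. by move=> k x y; rewrite scalerDr !scalerA mulrC. Qed.

Lemma linear_id {K : pzRingType} {U : lmodType K} : linear (fun x : U => x).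
Proof. by []. Qed.

Lemma linear_comp (K : pzRingType) (U V W : lmodType K) (f : V -> W) (g : U -> V) :
  linear f -> linear g -> linear (fun x => f (g x)).
Proof. by move=> lin_f lin_g a x y; rewrite lin_g lin_f. Qed.

Lemma bilinear_comp (K : nzRingType) (U U1 U2 V : lmodType K)
    (beta : U1 -> U2 -> V) (f : U -> U1) (g : U -> U2) :
  bilinear beta -> linear f -> linear g -> bilinear (fun a c => beta (f a) (g c)).
Proof.
case=> lin_l lin_r lin_f lin_g; split=> [c|a].
  exact: (linear_comp (lin_l _) lin_f).
exact: (linear_comp (lin_r _) lin_g).
Qed.

Lemma bilinear_swap (K : nzRingType) (U V : lmodType K) (beta : U -> U -> V) :
  bilinear beta -> bilinear (fun a c => beta c a).
Proof. by case. Qed.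

Definition tlift (R : realType) (M : falgType R[i]) (V : lmodType R[i])
    (beta : M -> M -> V) (T : tens2 M) : V :=
  \sum_i \sum_j T i j *: beta (tnth (wk_b M) i) (tnth (wk_b M) j).

Notation "\tsum_ ( a , c <- T ) F" := (tlift (fun a c => F) T)
  (at level 41, F at level 41, a, c, T at level 50).

Section TensorLift.
Variables (R : realType) (M : falgType R[i]).
Local Notation C := R[i].
Local Notation b := (wk_b M).
Local Notation bb i := (tnth (wk_b M) i).
Local Notation T2 := (tens2 M).

Lemma linear_mull (y : M) : linear (fun x : M => x * y).
Proof. by move=> k x z; rewrite mulrDl scalerAl. Qed.

Lemma linear_mulr (y : M) : linear (fun x : M => y * x).
Proof. by move=> k x z; rewrite mulrDr scalerAr. Qed.

Lemma linear_mulC (s : C) : linear (fun t : C => s * t).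
Proof. by move=> k x y; rewrite mulrDr mulrCA. Qed.

Lemma linear_coord (i : 'I_(wk_dim M)) : linear (coord b i).
Proof. by move=> k x y; rewrite linearP. Qed.

Lemma coord_basis i j : coord b j (bb i) = (i == j)%:R.
Proof.
have /andP[_ free_b] := vbasisP (fullv : {vspace M}).
by rewrite (tnth_nth 0) coord_free.
Qed.

Lemma basis_expansion (x : M) : x = \sum_i coord b i x *: bb i.
Proof.
rewrite {1}(coord_vbasis (memvf x)); apply: eq_bigr => i _.
by rewrite (tnth_nth 0).
Qed.

Lemma linear_expansion (V : lmodType C) (f : M -> V) (x : M) :
  linear f -> f x = \sum_i coord b i x *: f (bb i).
Proof.
move=> lin_f; rewrite {1}(basis_expansion x) (linear_for_sum lin_f).
by apply: eq_bigr => i _; rewrite (linear_forZ lin_f).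
Qed.

Lemma tens_basis i j : tens (bb i) (bb j) = delta_mx i j.
Proof.
apply/matrixP => k l; rewrite !mxE !coord_basis (eq_sym k) (eq_sym l).
by case: (i == k); rewrite ?mul1r ?mul0r.
Qed.

Lemma tens2_expansion (T : T2) : \tsum_(a, c <- T) tens a c = T.
Proof.
rewrite [RHS]matrix_sum_delta; apply: eq_bigr => i _; apply: eq_bigr => j _.
by rewrite tens_basis.
Qed.

Lemma bilinear_tens : bilinear (@tens R M).
Proof.
split=> [y|x] k u v; apply/matrixP => i j; rewrite !mxE linearP /=.
  by rewrite mulrDl mulrA.
by rewrite mulrDr mulrCA.
Qed.

Lemma linear_tlift (V : lmodType C) (beta : M -> M -> V) : linear (tlift beta).
Proof.
move=> k T U; rewrite /tlift scaler_sumr -big_split; apply: eq_bigr => i _.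
rewrite scaler_sumr -big_split; apply: eq_bigr => j _.
by rewrite !mxE scalerDl scalerA.
Qed.

Lemma eq_tlift (V : lmodType C) (beta beta' : M -> M -> V) (T : T2) :
  (forall i j, beta (bb i) (bb j) = beta' (bb i) (bb j)) ->
  tlift beta T = tlift beta' T.
Proof. by move=> eq_beta; do 2![apply: eq_bigr => ? _]; rewrite eq_beta. Qed.

Lemma linear_tliftE (V W : lmodType C) (f : V -> W) (beta : M -> M -> V) (T : T2) :
  linear f -> f (tlift beta T) = \tsum_(a, c <- T) f (beta a c).
Proof.
move=> lin_f; rewrite /tlift (linear_for_sum lin_f); apply: eq_bigr => i _.
rewrite (linear_for_sum lin_f); apply: eq_bigr => j _; exact: linear_forZ.
Qed.

Lemma tlift_comp (V : lmodType C) (beta : M -> M -> V) (gamma : M -> M -> T2) T :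
  tlift beta (tlift gamma T) = \tsum_(a, c <- T) tlift beta (gamma a c).
Proof. exact/linear_tliftE/linear_tlift. Qed.

Lemma tlift_tens (V : lmodType C) (beta : M -> M -> V) (x y : M) :
  bilinear beta -> tlift beta (tens x y) = beta x y.
Proof.
case=> lin_l lin_r; rewrite (linear_expansion _ (lin_l y)); apply: eq_bigr => i _.
rewrite (linear_expansion _ (lin_r (bb i))) scaler_sumr; apply: eq_bigr => j _.
by rewrite mxE scalerA.
Qed.

Lemma tlift_sum (V : lmodType C) (I : Type) (r : seq I) (beta : I -> M -> M -> V) T :
  \tsum_(a, c <- T) \sum_(q <- r) beta q a c = \sum_(q <- r) tlift (beta q) T.
Proof.
rewrite /tlift; under eq_bigr do under eq_bigr do rewrite scaler_sumr.
by under eq_bigr do rewrite exchange_big; rewrite exchange_big.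
Qed.

Lemma linear_tlift_param (V W : lmodType C) (beta : W -> M -> M -> V) (T : T2) :
  (forall a c, linear (fun w => beta w a c)) -> linear (fun w => tlift (beta w) T).
Proof.
move=> lin_beta k x y; rewrite /tlift scaler_sumr -big_split; apply: eq_bigr => i _.
rewrite scaler_sumr -big_split; apply: eq_bigr => j _.
by rewrite lin_beta scalerDr !scalerA mulrC.
Qed.

Lemma linear_entry p q : linear (fun T : T2 => T p q).
Proof. by move=> k U W; rewrite !mxE. Qed.

Lemma entry_tlift (T : T2) p q :
  T p q = \tsum_(a, c <- T) coord b p a * coord b q c.
Proof.
rewrite -{1}(tens2_expansion T) (linear_tliftE _ _ (linear_entry p q)).
by apply: eq_tlift => i j; rewrite mxE.
Qed.

Lemma bilinear_mul : bilinear (fun a c : M => a * c).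
Proof. by split=> [c|a]; [exact: linear_mull|exact: linear_mulr]. Qed.

Lemma bilinear_scale (V : lmodType C) (phi : M -> C) (f : M -> V) :
  linear phi -> linear f -> bilinear (fun a c => phi a *: f c).
Proof.
move=> lin_phi lin_f; split=> [c|a] k x y /=.
  by rewrite lin_phi scalerDl scalerA.
by rewrite lin_f scalerDr !scalerA mulrC.
Qed.

Lemma bilinear_mulC (phi psi : M -> C) :
  linear phi -> linear psi -> bilinear (fun a c => phi a * psi c).
Proof. exact: bilinear_scale. Qed.

Definition rslice (phi : M -> C) (T : T2) : M := \tsum_(a, c <- T) phi c *: a.

Lemma map2E (f g : M -> M) T : map2 f g T = \tsum_(a, c <- T) tens (f a) (g c).
Proof. by []. Qed.

Lemma muE (T : T2) : mu T = \tsum_(a, c <- T) a * c.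
Proof. by []. Qed.

Lemma app_lE (phi : M -> C) (psi : M -> M) T :
  app_l phi psi T = \tsum_(a, c <- T) phi a *: psi c.
Proof. by do 2![apply: eq_bigr => ? _]; rewrite scalerA. Qed.

Lemma mul2E (T U : T2) :
  mul2 T U = \tsum_(a, c <- T) \tsum_(a', c' <- U) tens (a * a') (c * c').
Proof.
do 2![apply: eq_bigr => ? _]; rewrite scaler_sumr.
by do 2![apply: eq_bigr => ? _; rewrite ?scaler_sumr]; rewrite scalerA.
Qed.

Lemma flip2E (T : T2) : flip2 T = \tsum_(a, c <- T) tens c a.
Proof.
apply/matrixP => p q; rewrite mxE (entry_tlift T) (entry_tlift (tlift _ T)) tlift_comp.
apply: eq_tlift => i j; rewrite tlift_tens; first exact: mulrC.
exact: bilinear_mulC (linear_coord _) (linear_coord _).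
Qed.

Lemma tlift_map2 (V : lmodType C) (beta : M -> M -> V) (f g : M -> M) T :
  bilinear beta -> tlift beta (map2 f g T) = \tsum_(a, c <- T) beta (f a) (g c).
Proof. by move=> bil; rewrite map2E tlift_comp; apply: eq_tlift => i j; rewrite tlift_tens. Qed.

Lemma tlift_flip2 (V : lmodType C) (beta : M -> M -> V) T :
  bilinear beta -> tlift beta (flip2 T) = \tsum_(a, c <- T) beta c a.
Proof. by move=> bil; rewrite flip2E tlift_comp; apply: eq_tlift => i j; rewrite tlift_tens. Qed.

Lemma tlift_mul2 (V : lmodType C) (beta : M -> M -> V) T U :
  bilinear beta ->
  tlift beta (mul2 T U) = \tsum_(a, c <- T) \tsum_(a', c' <- U) beta (a * a') (c * c').
Proof.
move=> bil; rewrite mul2E tlift_comp; apply: eq_tlift => i j.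
by rewrite tlift_comp; apply: eq_tlift => k l; rewrite tlift_tens.
Qed.

Lemma bilinear_mul2 (V : lmodType C) (beta : M -> M -> V) U :
  bilinear beta -> bilinear (fun a c => \tsum_(a', c' <- U) beta (a * a') (c * c')).
Proof.
case=> lin_l lin_r; split=> [c|a]; apply: linear_tlift_param => a' c'.
  exact: (linear_comp (lin_l _) (linear_mull _)).
exact: (linear_comp (lin_r _) (linear_mull _)).
Qed.

Lemma linear_mul2 (T : T2) : linear (mul2 T).
Proof.
move=> k U W; rewrite !mul2E.
apply: (linear_tlift_param (beta := fun U a c => \tsum_(a', c' <- U) tens (a * a') (c * c'))).
by move=> a c; apply: linear_tlift.
Qed.

Lemma mul2A (T U W : T2) : mul2 (mul2 T U) W = mul2 T (mul2 U W).
Proof.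
have bil_tens_mul: bilinear (fun a c => \tsum_(a', c' <- W) tens (a * a') (c * c')).
  exact/bilinear_mul2/bilinear_tens.
rewrite [LHS]mul2E tlift_mul2 // [RHS]mul2E; apply: eq_tlift => i j.
rewrite mul2E tlift_comp; apply: eq_tlift => k l; rewrite tlift_comp.
apply: eq_tlift => p q; rewrite tlift_tens ?mulrA //.
exact: (bilinear_comp bilinear_tens (linear_mulr _) (linear_mulr _)).
Qed.

Lemma linear_theta : linear (@theta R M).
Proof.
move=> k x y; rewrite /theta scaler_sumr -big_split; apply: eq_bigr => i _.
by rewrite mulrDl -scalerAl linearP.
Qed.

Lemma theta_mulC (x y : M) : theta (x * y) = theta (y * x).
Proof.
have coord_mul u v i : coord b i (u * (v * bb i)) =
    \sum_j coord b j (v * bb i) * coord b i (u * bb j).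
  rewrite {1}(basis_expansion (v * bb i)) mulr_sumr linear_sum.
  by apply: eq_bigr => j _; rewrite -scalerAr linearZ.
rewrite /theta; under eq_bigr do rewrite -mulrA coord_mul.
under [RHS]eq_bigr do rewrite -mulrA coord_mul.
by rewrite exchange_big; do 2![apply: eq_bigr => ? _]; rewrite mulrC.
Qed.

(* Cyclicity of the trace: the right-hand side is the trace on [M ⊗ M] of the
   composite taken in the other order. *)
Lemma trace_tlift_comp (K : M -> T2) (Psi : M -> M -> M) : linear K ->
  \sum_i coord b i (tlift Psi (K (bb i))) = \sum_p \sum_q K (Psi (bb p) (bb q)) p q.
Proof.
move=> lin_K; under eq_bigr do rewrite (linear_tliftE _ _ (linear_coord _)).
have lin_entry p q : linear (fun w => K w p q).
  exact: (linear_comp (linear_entry p q) lin_K).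
under [RHS]eq_bigr do under eq_bigr do rewrite (linear_expansion _ (lin_entry _ _)).
rewrite /tlift exchange_big; apply: eq_bigr => p _.
rewrite exchange_big; apply: eq_bigr => q _.
by apply: eq_bigr => i _; exact: mulrC.
Qed.

Lemma tlift_DeltaL (D : M -> T2) (V : lmodType C) (gamma : M -> M -> M -> V) T :
  \tsum_(a, c <- T) \tsum_(a1, a2 <- D a) gamma a1 a2 c =
  \sum_i \sum_j \sum_k DeltaL D T i j k *: gamma (bb i) (bb j) (bb k).
Proof.
rewrite /tlift /DeltaL.
under eq_bigr do under eq_bigr do rewrite scaler_sumr.
under eq_bigr do under eq_bigr do under eq_bigr do rewrite scaler_sumr.
under eq_bigr do under eq_bigr do under eq_bigr do under eq_bigr do rewrite scalerA.
under [RHS]eq_bigr do under eq_bigr do under eq_bigr do rewrite scaler_suml.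
under eq_bigr do rewrite exchange_big.
under eq_bigr do under eq_bigr do rewrite exchange_big.
rewrite exchange_big; under eq_bigr do rewrite exchange_big.
by under eq_bigr do under eq_bigr do rewrite exchange_big.
Qed.

Lemma tlift_DeltaR (D : M -> T2) (V : lmodType C) (gamma : M -> M -> M -> V) T :
  \tsum_(a, c <- T) \tsum_(c1, c2 <- D c) gamma a c1 c2 =
  \sum_i \sum_j \sum_k DeltaR D T i j k *: gamma (bb i) (bb j) (bb k).
Proof.
rewrite /tlift /DeltaR.
under eq_bigr do under eq_bigr do rewrite scaler_sumr.
under eq_bigr do under eq_bigr do under eq_bigr do rewrite scaler_sumr.
under eq_bigr do under eq_bigr do under eq_bigr do under eq_bigr do rewrite scalerA.
under [RHS]eq_bigr do under eq_bigr do under eq_bigr do rewrite scaler_suml.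
under eq_bigr do rewrite exchange_big.
by under eq_bigr do under eq_bigr do rewrite exchange_big.
Qed.

Lemma tlift_coassoc (D : M -> T2) (V : lmodType C) (gamma : M -> M -> M -> V) T :
  DeltaL D T = DeltaR D T ->
  \tsum_(a, c <- T) \tsum_(a1, a2 <- D a) gamma a1 a2 c =
  \tsum_(a, c <- T) \tsum_(c1, c2 <- D c) gamma a c1 c2.
Proof. by move=> coassoc; rewrite tlift_DeltaL tlift_DeltaR coassoc. Qed.

Lemma rslice_mul2_tens (phi : M -> C) (T : T2) (z w : M) : linear phi ->
  rslice phi (mul2 T (tens z w)) = \tsum_(a, c <- T) phi (c * w) *: (a * z).
Proof.
move=> lin_phi; rewrite /rslice tlift_mul2; last first.
  exact: bilinear_swap (bilinear_scale lin_phi linear_id).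
apply: eq_tlift => i j; rewrite tlift_tens //.
exact: bilinear_swap (bilinear_scale (linear_comp lin_phi (linear_mulr _)) (linear_mulr _)).
Qed.

End TensorLift.

Arguments bilinear_tens {R M}.
Arguments bilinear_mul {R M}.
Arguments linear_theta {R M}.

Section WeakKacIdentities.
Variables (R : realType) (M : falgType R[i]).
Local Notation C := R[i].
Local Notation b := (wk_b M).
Local Notation bb i := (tnth (wk_b M) i).
Local Notation T2 := (tens2 M).

Variables (D : M -> T2) (S : M -> M).
Hypotheses (linear_D : linear D) (DeltaM : forall x y, D (x * y) = mul2 (D x) (D y)).
Hypothesis Delta_coassoc : forall x, DeltaL D (D x) = DeltaR D (D x).
Hypotheses (linear_S : linear S) (S1 : S 1 = 1).
Hypotheses (S_antiM : forall x y, S (x * y) = S y * S x) (SK : involutive S).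
Hypothesis SS_Delta : forall x, map2 S S (D x) = flip2 (D (S x)).
Hypothesis eps_s_Delta : forall x, map2 (eps_s D S) id (D x) = mul2 (tens 1 x) (D 1).

Definition eps_t (x : M) : M := \tsum_(a, c <- D x) a * S c.

Lemma eps_sE x : eps_s D S x = \tsum_(a, c <- D x) S a * c.
Proof. by rewrite /eps_s muE tlift_map2 //; exact: bilinear_mul. Qed.

Lemma linear_eps_s : linear (eps_s D S).
Proof. by move=> k x y; rewrite !eps_sE linear_D linear_tlift. Qed.

Lemma tlift_DeltaS (V : lmodType C) (beta : M -> M -> V) x : bilinear beta ->
  tlift beta (D (S x)) = \tsum_(a, c <- D x) beta (S c) (S a).
Proof.
move=> bil; have -> : D (S x) = flip2 (map2 S S (D x)) by rewrite SS_Delta /flip2 trmxK.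
by rewrite tlift_flip2 ?tlift_map2 //; exact: bilinear_swap.
Qed.

Lemma eps_sS x : eps_s D S (S x) = S (eps_t x).
Proof.
rewrite eps_sE tlift_DeltaS; last exact: bilinear_comp bilinear_mul linear_S linear_id.
by rewrite (linear_tliftE _ _ linear_S); apply: eq_tlift => i j; rewrite S_antiM !SK.
Qed.

Lemma eps_t_Delta x : map2 id eps_t (D x) = mul2 (D 1) (tens x 1).
Proof.
have bil_SS : bilinear (fun a c => tens (S c) (S a)).
  exact: bilinear_swap (bilinear_comp bilinear_tens linear_S linear_S).
have := congr1 (tlift (fun a c => tens (S c) (S a))) (eps_s_Delta (S x)).
rewrite tlift_map2 // tlift_DeltaS; last first.
  exact: bilinear_swap (bilinear_comp bilinear_tens linear_S
                          (linear_comp linear_S linear_eps_s)).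
rewrite tlift_mul2 // tlift_tens; last exact: bilinear_mul2 bil_SS.
move=> eq_x; rewrite map2E.
transitivity (\tsum_(a, c <- D x) tens (S (S a)) (S (eps_s D S (S c)))).
  by apply: eq_tlift => i j; rewrite eps_sS !SK.
rewrite eq_x; transitivity (\tsum_(a, c <- D (S 1)) tens (a * x) c).
  rewrite tlift_DeltaS; last exact: bilinear_comp bilinear_tens (linear_mull x) linear_id.
  by apply: eq_tlift => i j; rewrite S_antiM SK mul1r.
rewrite S1 mul2E; apply: eq_tlift => i j; rewrite tlift_tens ?mulr1 //.
exact: bilinear_comp bilinear_tens (linear_mulr _) (linear_mulr _).
Qed.

Lemma app_l_mul2_Delta1 (phi : M -> C) x : linear phi ->
  app_l phi S (mul2 (D 1) (tens x 1)) = app_l phi (fun y => eps_s D S (S y)) (D x).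
Proof.
move=> lin_phi; rewrite !app_lE -eps_t_Delta tlift_map2; last exact: bilinear_scale.
by apply: eq_tlift => i j; rewrite eps_sS.
Qed.

Lemma mul2_Delta1_tens y :
  mul2 (D 1) (tens y 1) = \tsum_(a, c <- D y) mul2 (D a) (tens 1 (S c)).
Proof.
rewrite -eps_t_Delta map2E.
transitivity (\tsum_(a, c <- D y) \tsum_(a1, a2 <- D a) tens a1 (a2 * S c)); last first.
  apply: eq_tlift => i j; rewrite mul2E; apply: eq_tlift => k l.
  rewrite tlift_tens ?mulr1 //.
  exact: bilinear_comp bilinear_tens (linear_mulr _) (linear_mulr _).
rewrite (tlift_coassoc (fun a1 a2 c => tens a1 (a2 * S c)) (Delta_coassoc y)).
by apply: eq_tlift => i j; rewrite /eps_t (linear_tliftE _ _ (bilinear_tens.2 _)).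
Qed.

Lemma mul2_Delta_tens x y :
  mul2 (D x) (tens y 1) = \tsum_(a, c <- D y) mul2 (D (x * a)) (tens 1 (S c)).
Proof.
have -> : D x = mul2 (D x) (D 1) by rewrite -DeltaM mulr1.
rewrite mul2A mul2_Delta1_tens (linear_tliftE _ _ (linear_mul2 _)).
by apply: eq_tlift => i j; rewrite -mul2A -DeltaM.
Qed.

Definition twisted_slice (phi : M -> C) (w c : M) : M :=
  rslice phi (mul2 (D w) (tens 1 (S c))).

Lemma twisted_sliceE (phi : M -> C) w c : linear phi ->
  twisted_slice phi w c = \tsum_(w1, w2 <- D w) phi (w2 * S c) *: w1.
Proof.
by move=> lin_phi; rewrite /twisted_slice rslice_mul2_tens //; apply: eq_tlift => i j; rewrite mulr1.
Qed.

Lemma bilinear_twisted_slice (phi : M -> C) : linear phi -> bilinear (twisted_slice phi).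
Proof.
move=> lin_phi; split=> [c|w] k u v; rewrite !twisted_sliceE //.
  by rewrite linear_D linear_tlift.
apply: (linear_tlift_param (beta := fun c w1 w2 => phi (w2 * S c) *: w1)) => w1 w2.
exact: (bilinear_scale (linear_comp lin_phi (linear_comp (linear_mulr w2) linear_S))
          linear_id).1.
Qed.

Lemma rslice_Delta_mul (phi : M -> C) x y : linear phi ->
  rslice phi (D x) * y =
  \tsum_(a, c <- map2 (fun a => x * a) id (D y)) twisted_slice phi a c.
Proof.
move=> lin_phi; rewrite tlift_map2; last exact: bilinear_twisted_slice.
transitivity (rslice phi (mul2 (D x) (tens y 1))).
  rewrite rslice_mul2_tens // /rslice (linear_tliftE _ _ (linear_mull y)).
  by apply: eq_tlift => i j; rewrite mulr1 scalerAl.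
by rewrite mul2_Delta_tens /rslice (linear_tliftE _ _ (linear_tlift _)).
Qed.

Lemma theta_Delta_trace (phi : M -> C) x : linear phi ->
  \tsum_(a, c <- D x) theta a * phi c =
  \sum_p \sum_q map2 (fun a => x * a) id (D (twisted_slice phi (bb p) (bb q))) p q.
Proof.
move=> lin_phi; have lin_K : linear (fun y => map2 (fun a => x * a) id (D y)).
  by move=> k u v; rewrite !map2E linear_D linear_tlift.
rewrite -(trace_tlift_comp _ lin_K); under eq_bigr do rewrite -rslice_Delta_mul //.
rewrite -[RHS]/(theta (rslice phi (D x))) /rslice (linear_tliftE _ _ linear_theta).
apply: eq_tlift => i j.
by rewrite (linear_forZ linear_theta) [RHS]mulrC.
Qed.

Lemma S_eps_tE c : S (eps_t c) = \tsum_(v, w <- D c) w * S v.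
Proof.
by rewrite /eps_t (linear_tliftE _ _ linear_S); apply: eq_tlift => i j; rewrite S_antiM SK.
Qed.

Lemma twisted_slice_trace (phi : M -> C) x p : linear phi ->
  \sum_q map2 (fun a => x * a) id (D (twisted_slice phi (bb p) (bb q))) p q =
  \tsum_(u, c <- D (bb p)) coord b p (x * u) * phi (S (eps_t c)).
Proof.
move=> lin_phi; have lin_K q : linear (fun w => map2 (fun a => x * a) id (D w) p q).
  apply: linear_comp (linear_entry p q) _ => k u v.
  by rewrite !map2E linear_D linear_tlift.
have lin_phiS w : linear (fun v => phi (w * S v)).
  exact: linear_comp lin_phi (linear_comp (linear_mulr w) linear_S).
transitivity (\tsum_(w1, w2 <- D (bb p)) \tsum_(u, v <- D w1)
                coord b p (x * u) * phi (w2 * S v)); last first.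
  rewrite (tlift_coassoc (fun u v w2 => coord b p (x * u) * phi (w2 * S v))) //.
  apply: eq_tlift => i j; rewrite S_eps_tE (linear_tliftE _ _ lin_phi).
  by rewrite (linear_tliftE _ _ (linear_mulC _)).
have entry_map2 q w : map2 (fun a => x * a) id (D w) p q =
    \tsum_(u, v <- D w) coord b p (x * u) * coord b q v.
  rewrite entry_tlift tlift_map2 //.
  exact: bilinear_mulC (linear_coord p) (linear_coord q).
under eq_bigr => q _ do rewrite twisted_sliceE // (linear_tliftE _ _ (lin_K q)).
rewrite -tlift_sum; apply: eq_tlift => i j.
under eq_bigr => q _ do rewrite (linear_forZ (lin_K q)) entry_map2
  (linear_tliftE _ _ (linear_scale _)).
rewrite -tlift_sum; apply: eq_tlift => k l.
rewrite [in RHS](linear_expansion (bb l) (lin_phiS _)) mulr_sumr.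
by apply: eq_bigr => q _; exact: etrans (mulrCA _ _ _) (congr1 _ (mulrC _ _)).
Qed.

Lemma tlift_eps_t (psi phi : M -> C) z : linear psi -> linear phi ->
  \tsum_(u, c <- D z) psi u * phi (S (eps_t c)) =
  \tsum_(a, c <- D 1) psi (a * z) * phi (S c).
Proof.
move=> lin_psi lin_phi.
have bil : bilinear (fun u c => psi u * phi (S c)).
  exact: bilinear_mulC lin_psi (linear_comp lin_phi linear_S).
rewrite -[LHS](tlift_map2 id eps_t _ bil) eps_t_Delta tlift_mul2 //.
apply: eq_tlift => i j; rewrite tlift_tens ?mulr1 //.
exact: bilinear_mulC (linear_comp lin_psi (linear_mulr _))
                     (linear_comp lin_phi (linear_comp linear_S (linear_mulr _))).
Qed.

Lemma theta_Delta (phi : M -> C) x : linear phi ->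
  \tsum_(a, c <- D x) theta a * phi c =
  \tsum_(a, c <- mul2 (D 1) (tens x 1)) theta a * phi (S c).
Proof.
move=> lin_phi; rewrite theta_Delta_trace //.
under eq_bigr => p _ do rewrite twisted_slice_trace //
  (tlift_eps_t _ (linear_comp (linear_coord p) (linear_mulr x)) lin_phi).
rewrite -tlift_sum tlift_mul2; last exact: bilinear_mulC linear_theta (linear_comp lin_phi linear_S).
apply: eq_tlift => i j; rewrite tlift_tens; last first.
  exact: bilinear_mulC (linear_comp linear_theta (linear_mulr _))
                       (linear_comp lin_phi (linear_comp linear_S (linear_mulr _))).
rewrite mulr1 theta_mulC /theta mulr_suml.
by apply: eq_bigr => p _; rewrite mulrA.
Qed.

Lemma app_l_theta_Delta x :
  app_l (@theta R M) id (D x) = app_l (@theta R M) S (mul2 (D 1) (tens x 1)).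
Proof.
rewrite [LHS]basis_expansion [RHS]basis_expansion; apply: eq_bigr => k _; congr (_ *: _).
have coord_app_l psi T :
    coord b k (app_l (@theta R M) psi T) = \tsum_(a, c <- T) theta a * coord b k (psi c).
  by rewrite app_lE (linear_tliftE _ _ (linear_coord k)); apply: eq_tlift => i j; rewrite linearZ.
by rewrite !coord_app_l theta_Delta //; exact: linear_coord.
Qed.

End WeakKacIdentities.

Theorem proposition2p3p3 (R : realType) (M : falgType R[i])
    (star : M -> M) (Delta : M -> tens2 M) (S : M -> M) (eps : M -> R[i]) :
  weak_kac star Delta S eps ->
  forall x : M,
    app_l (@theta R M) id (Delta x)
      = app_l (@theta R M) S (mul2 (Delta 1) (tens x 1))
  /\ app_l (@theta R M) S (mul2 (Delta 1) (tens x 1))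
      = app_l (@theta R M) (fun y => eps_s Delta S (S y)) (Delta x).
Proof.
move=> [_ [linear_D DeltaM _ _ Delta_coassoc] [linear_S S1 S_antiM _ [_ SK SS_Delta]]
        [_ _ _ [_ _ _ eps_s_Delta]]] x.
split; first exact: app_l_theta_Delta.
exact: app_l_mul2_Delta1 linear_theta.
Qed.
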